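(* Let $G$ be a finite Abelian group, let $S \subseteq G$ with $0 \notin S$, and let $\delta > 0$. If $\lambda(S) \geqslant (\delta - 1)|S|$, then $$\lambda\big(S \cup (-S)\big) \geqslant \Big(\frac{\delta}{2} - 1\Big)\,|S \cup (-S)|.$$
   Context: For $T \subseteq G$ with $0 \notin T$, $A(T)$ is the $G\times G$ $(0,1)$-matrix with $A(T)(x,y) = 1$ iff $y - x \in T$, and $\lambda(T) = \min\{\Re(\lambda) : A(T)v = \lambda v \text{ for some } v \neq \mathbf{0}\}$. The paper writes $\lambda(\mathcal{G}^*_S)$ for $\lambda(S\cup(-S))$, the smallest eigenvalue of the adjacency matrix $A(S\cup(-S))$ of the Cayley graph of $S$ (edges $xy$ with $x-y \in S$ or $y - x \in S$). *)

(* Complex eigenvalues are taken in algC (algebraic complex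
   numbers); eigenvalues of a (0,1)-matrix are algebraic, so nothing is lost. *)
From HB Require Import structures.
From mathcomp Require Import all_boot all_order all_algebra all_field.
Set Implicit Arguments. Unset Strict Implicit. Unset Printing Implicit Defensive.
Import Order.TTheory GRing.Theory Num.Theory.
Local Open Scope ring_scope.

Definition adjA (G : finZmodType) (T : {set G}) (x y : G) : algC :=
  if (y - x) \in T then 1 else 0.

Definition is_eigenvalue (G : finZmodType) (T : {set G}) (mu : algC) : Prop :=
  exists v : G -> algC, (exists x, v x != 0) /\
    forall x, \sum_(y : G) adjA T x y * v y = mu * v x.

Definition is_lambda (G : finZmodType) (T : {set G}) (l : algC) : Prop :=
  (exists mu, is_eigenvalue T mu /\ 'Re mu = l) /\
  (forall mu, is_eigenvalue T mu -> l <= 'Re mu).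

Definition symm (G : finZmodType) (S : {set G}) : {set G} :=
  S :|: [set - x | x in S].

(* Split A(S ∪ -S) = A(S) + A(R) with R = (S ∪ -S) \ S. Adjacency matrices of
   Cayley digraphs of an abelian group commute, so an eigenvector of A(S ∪ -S)
   for the eigenvalue mu realising lambda(S ∪ -S) can be chosen to be an
   eigenvector of A(S) as well, say for b; it is then an eigenvector of A(R)
   for mu - b.  Hence Re mu >= Re b - |mu - b| >= lambda(S) - |R|, and since
   |R| <= |S| this is at least (delta - 1)|S| - |R| >= (delta/2 - 1)(|S| + |R|). *)
From HB Require Import structures.
From mathcomp Require Import all_boot all_order all_algebra all_field.
From mathcomp Require Import ring.
Set Implicit Arguments. Unset Strict Implicit. Unset Printing Implicit Defensive.
Import Order.TTheory GRing.Theory Num.Theory.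
Local Open Scope ring_scope.

Lemma Nnorm_le_Re (C : numClosedFieldType) (z : C) : - `|z| <= 'Re z.
Proof.
rewrite lerNl; apply: le_trans (leif_normC_Re_Creal z).1.
by rewrite -normrN real_ler_norm // realN Creal_Re.
Qed.

Lemma eigenvalue_comm_addr (C : numClosedFieldType) n (A B : 'M[C]_n) mu :
  comm_mx A B -> eigenvalue (A + B) mu ->
  exists b, eigenvalue A b /\ eigenvalue B (mu - b).
Proof.
move=> cAB eig_mu; set E := eigenspace (A + B) mu.
have rE : (0 < \rank E)%N by rewrite lt0n mxrank_eq0.
have stE : stablemx E A.
  by apply/comm_mx_stable_eigenspace/comm_mx_sym/comm_mxD => //; exact: comm_mx_sym.
have [b /eigenvalueP[w' w'b w'0]] := eigenvalue_closed (restrictmx E A) rE.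
have stw' : stablemx w' (restrictmx E A).
  by apply/eigenvectorP; exists b; apply/eigenspaceP.
rewrite (stablemx_restrict _ stE) in stw'.
set w := w' *m row_base E.
have w0 : w != 0 by rewrite mulmx_free_eq0 ?row_base_free.
have wAB : w *m (A + B) = mu *: w.
  by apply/eigenspaceP; rewrite mulmx_sub // eq_row_base.
have [b' /eigenspaceP wA] := eigenvectorP _ stw'.
exists b'; split; apply/eigenvalueP; exists w => //.
by rewrite scalerBl -wA -wAB mulmxDr addrC addKr.
Qed.

Section AdjacencyMatrix.

Variable G : finZmodType.
Implicit Types (S T : {set G}) (f : G -> algC).

Lemma adjA_setD S T x y :
  S \subset T -> adjA T x y = adjA S x y + adjA (T :\: S) x y.
Proof.
move=> /subsetP sST; rewrite /adjA in_setD.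
have [/sST -> | _] /= := boolP (y - x \in S); first by rewrite addr0.
by rewrite add0r.
Qed.

Lemma sum_adjA_col T y : \sum_x adjA T x y = #|T|%:R.
Proof.
rewrite (reindex_inj (inj_comp (addrI y) oppr_inj)) /=.
under eq_bigr do rewrite /adjA subKr.
by rewrite -big_mkcond /= sumr_const.
Qed.

Lemma is_eigenvalue_norm_le T nu : is_eigenvalue T nu -> `|nu| <= #|T|%:R.
Proof.
move=> [f [[x0 fx0] eq_f]]; set N := \sum_y `|f y|.
have N_gt0 : 0 < N.
  rewrite /N (bigD1 x0) //=; apply: (lt_le_trans (y := `|f x0|)).
    by rewrite normr_gt0.
  by rewrite lerDl sumr_ge0.
rewrite -(ler_pM2r N_gt0).
have -> : `|nu| * N = \sum_x `|\sum_y adjA T x y * f y|.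
  by rewrite /N mulr_sumr; apply: eq_bigr => x _; rewrite eq_f normrM.
apply: (le_trans (y := \sum_x \sum_y adjA T x y * `|f y|)).
  apply: ler_sum => x _; apply: (le_trans (ler_norm_sum _ _ _)).
  apply: ler_sum => y _; rewrite normrM /adjA.
  by case: ifP; rewrite ?normr1 ?normr0.
rewrite exchange_big /= /N mulr_sumr; apply: ler_sum => y _.
by rewrite -mulr_suml sum_adjA_col.
Qed.

(* Transposed, so that the row-vector convention [v *m adj_mx T] of mathcomp
   computes [A(T) v]. *)
Definition adj_mx T : 'M[algC]_#|G| :=
  \matrix_(i, j) adjA T (enum_val j) (enum_val i).

Definition row_of_fun f : 'rV[algC]_#|G| := \row_i f (enum_val i).

Lemma sum_enum_val (F : G -> algC) :
  \sum_(i < #|G|) F (enum_val i) = \sum_y F y.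
Proof. by rewrite -(big_enum_val (A := predT)). Qed.

Lemma adj_mx_setD S T :
  S \subset T -> adj_mx T = adj_mx S + adj_mx (T :\: S).
Proof. by move=> sST; apply/matrixP => i j; rewrite !mxE (adjA_setD _ _ sST). Qed.

(* The substitution z |-> a + c - z exchanges the two factors of each term;
   this is where the commutativity of G is used. *)
Lemma adj_mx_comm S T : comm_mx (adj_mx S) (adj_mx T).
Proof.
apply/matrixP => i j; rewrite !mxE.
under eq_bigr do rewrite !mxE.
under [RHS]eq_bigr do rewrite !mxE.
set a := enum_val i; set c := enum_val j.
rewrite (sum_enum_val (fun z => adjA S z a * adjA T c z)).
rewrite (sum_enum_val (fun z => adjA T z a * adjA S c z)).
rewrite (reindex_inj (inj_comp (addrI (a + c)) oppr_inj)) /=.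
apply: eq_bigr => z _; rewrite mulrC /adjA.
have -> : a + c - z - c = a - z by rewrite (addrAC _ (- z)) addrK.
by have -> : a - (a + c - z) = z - c by rewrite !opprD opprK !addrA subrr add0r addrC.
Qed.

Lemma row_of_fun_eigenP T f mu :
  (forall x, \sum_y adjA T x y * f y = mu * f x) <->
  row_of_fun f *m adj_mx T = mu *: row_of_fun f.
Proof.
have mulE x : (row_of_fun f *m adj_mx T) 0 (enum_rank x) =
              \sum_y adjA T x y * f y.
  rewrite mxE -sum_enum_val; apply: eq_bigr => i _.
  by rewrite !mxE enum_rankK mulrC.
split=> [eq_f | eq_v x].
  apply/rowP => i; rewrite -[i]enum_valK.
  by rewrite mulE eq_f !mxE enum_rankK.
by rewrite -mulE eq_v !mxE enum_rankK.
Qed.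

Lemma is_eigenvalueP T mu : is_eigenvalue T mu <-> eigenvalue (adj_mx T) mu.
Proof.
split=> [[f [[x fx] /row_of_fun_eigenP eq_f]] | /eigenvalueP[v eq_v v0]].
  apply/eigenvalueP; exists (row_of_fun f) => //.
  by apply: contraNneq fx => /rowP/(_ (enum_rank x)); rewrite !mxE enum_rankK => ->.
have rowK : row_of_fun (fun x => v 0 (enum_rank x)) = v.
  by apply/rowP => i; rewrite mxE enum_valK.
exists (fun x => v 0 (enum_rank x)); split; last first.
  by apply/row_of_fun_eigenP; rewrite rowK.
have /existsP[i vi] : [exists i, v 0 i != 0].
  apply: contraNT v0 => /existsPn v0; apply/eqP/rowP => i.
  by rewrite mxE; apply/eqP/negPn/v0.
by exists (enum_val i); rewrite enum_valK.
Qed.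

Lemma is_eigenvalue_split S T mu :
  S \subset T -> is_eigenvalue T mu ->
  exists b, is_eigenvalue S b /\ is_eigenvalue (T :\: S) (mu - b).
Proof.
move=> sST /is_eigenvalueP; rewrite (adj_mx_setD sST).
case/eigenvalue_comm_addr => [|b [eig_b eig_c]]; first exact: adj_mx_comm.
by exists b; split; apply/is_eigenvalueP.
Qed.

Lemma card_symm_setD S : (#|symm S :\: S| <= #|S|)%N.
Proof.
apply: leq_trans (leq_imset_card (fun x => - x) S).
apply: subset_leq_card; apply/subsetP => x.
by rewrite in_setD in_setU => /andP[/negPf ->].
Qed.

End AdjacencyMatrix.

Theorem lemma7p13 (G : finZmodType) (S : {set G}) (delta : algC)
  (lS lSS : algC) :
  0 \notin S -> 0 < delta ->
  is_lambda S lS -> is_lambda (symm S) lSS ->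
  (delta - 1) * #|S|%:R <= lS ->
  (delta / 2 - 1) * #|symm S|%:R <= lSS.
Proof.
move=> _ delta_gt0 [_ lS_min] [[mu [eig_mu <-]] _] lS_ge.
set R := symm S :\: S.
have sST : S \subset symm S := subsetUl _ _.
have [b [/lS_min Re_b /is_eigenvalue_norm_le norm_c]] :=
  is_eigenvalue_split sST eig_mu.
have Re_c : - #|R|%:R <= 'Re (mu - b).
  by apply: le_trans (Nnorm_le_Re _); rewrite lerN2.
have -> : 'Re mu = 'Re b + 'Re (mu - b) by rewrite -raddfD /= addrC subrK.
rewrite -(cardsID S (symm S)) (setIidPr sST) natrD.
have r_le_s : (#|R|%:R <= #|S|%:R :> algC) by rewrite ler_nat card_symm_setD.
set s : algC := #|S|%:R in r_le_s lS_ge *; set r : algC := #|R|%:R in r_le_s Re_c *.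
have -> : (delta / 2 - 1) * (s + r) = (delta - 1) * s - r - delta / 2 * (s - r).
  by field.
have Re_mu_ge : (delta - 1) * s - r <= 'Re b + 'Re (mu - b).
  exact: lerD (le_trans lS_ge Re_b) Re_c.
apply: le_trans Re_mu_ge.
rewrite lerBlDr lerDl mulr_ge0 ?subr_ge0 //.
by rewrite divr_ge0 ?ltW.
Qed.
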